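(* Let $\mathcal{G}=(V,E,\lambda)$ be a temporal graph with $m=|E|$ edges, maximum footprint degree $\Delta$, and lifetime of length $\tau$, and let $s\in V$. The procedure that initializes $B_s=\{(\bot,-\infty,\infty)\}$ and $B_v=\emptyset$ for $v\neq s$ and calls $\mathrm{improveNeighbors}(s)$ — where $\mathrm{improveNeighbors}(u)$, for every triplet $(\cdot,a,d)\in B_u$ and every neighbor $v$ of $u$, sets $a'=\min\{t\in\lambda(uv)\mid t\ge a\}$ and $d'=\max\{t\in\lambda(uv)\mid t\le d\}$ and, if $B_v+(u,a',d')\neq B_v$, sets $B_v\gets B_v+(u,a',d')$ and calls $\mathrm{improveNeighbors}(v)$ — runs in time polynomial in the size of the input, namely $O(m\Delta^2\tau^4)$. Here $B+(x,a',d')$ adds the triplet to $B$ unless some $(x,a'',d'')\in B$ has $a''\le a'$ and $d''\ge d'$, and upon adding removes all $(x,a'',d'')$ with $a'\le a''$ and $d'\ge d''$.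
   Context: A temporal graph is $\mathcal{G}=(V,E,\lambda)$ with $V$ finite, $E$ undirected edges, $\lambda:E\to 2^{\mathbb{N}}$ the time labels. The lifetime is the range of time labels, of length $\tau$. $\Delta$ is the maximum number of neighbors of a vertex in the footprint $(V,E)$. It is assumed that, for a given edge, finding the smallest (resp. largest) label within a given time range can be done in time $O(\tau)$ (as holds, e.g., with time-augmented adjacency lists or sequences of adjacency matrices). *)

From HB Require Import structures.
From mathcomp Require Import all_boot all_order.
Set Implicit Arguments. Unset Strict Implicit. Unset Printing Implicit Defensive.

Inductive ext := MInf | Fin of nat | PInf.

Definition ext_eqb (x y : ext) : bool :=
  match x, y with
  | MInf, MInf => true | PInf, PInf => true
  | Fin m, Fin n => m == n | _, _ => false end.

Lemma ext_eqP : Equality.axiom ext_eqb.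
Proof.
by case=> [|m|] [|n|] /=; try (by constructor); apply: (iffP eqP) => [->|[]].
Qed.
HB.instance Definition _ := hasDecEq.Build ext ext_eqP.

Definition ext_le (x y : ext) : bool :=
  match x, y with
  | MInf, _ => true | _, PInf => true
  | Fin m, Fin n => m <= n | _, _ => false end.
Definition ext_min x y := if ext_le x y then x else y.
Definition ext_max x y := if ext_le x y then y else x.

Definition firstge (l : seq nat) (a : ext) : ext :=
  foldr (fun t acc => if ext_le a (Fin t) then ext_min (Fin t) acc else acc) PInf l.
Definition lastle (l : seq nat) (d : ext) : ext :=
  foldr (fun t acc => if ext_le (Fin t) d then ext_max (Fin t) acc else acc) MInf l.

(* triplets (x, a, d); x = None stands for the symbol _|_ *)
Definition trip (V : finType) := (option V * ext * ext)%type.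

Definition addt (V : finType) (B : seq (trip V)) (x : option V) (a d : ext)
  : seq (trip V) :=
  if has (fun t : trip V => [&& t.1.1 == x, ext_le t.1.2 a & ext_le d t.2]) B
  then B
  else (x, a, d) :: filter
         (fun t : trip V => ~~ [&& t.1.1 == x, ext_le a t.1.2 & ext_le t.2 d]) B.

Definition updB (V : finType) (B : V -> seq (trip V)) (v : V) (Bv : seq (trip V)) :=
  fun w => if w == v then Bv else B w.

Definition state (V : finType) := ((V -> seq (trip V)) * nat)%type.

(* improveNeighbors, instrumented with a step counter (second component of
   the state) and with fuel (None = fuel exhausted).  Cost model:
   - 1 unit per call;
   - per (triplet, neighbor) iteration: tau+1 units for each of the two
     label lookups (assumption of the paper: O(tau)), plus 1 + (number of
     triplets of B_v with first component u) for computing B_v + (u,a',d')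
     and testing whether it differs from B_v (triplets are assumed stored
     per first component). *)
Fixpoint improve (V : finType) (nbrs : V -> seq V) (lam : V -> V -> seq nat)
  (tau : nat) (fuel : nat) (u : V) (st : state V) : option (state V) :=
  match fuel with
  | 0 => None
  | fuel'.+1 =>
    let B0 := st.1 in
    let step (ost : option (state V)) (p : trip V * V) : option (state V) :=
      match ost with
      | None => None
      | Some stc =>
        let B := stc.1 in let c := stc.2 in
        let a := p.1.1.2 in let d := p.1.2 in let v := p.2 in
        let a' := firstge (lam u v) a in
        let d' := lastle (lam u v) d in
        let c1 := c + 2 * tau.+1
                    + (count (fun t : trip V => t.1.1 == Some u) (B v)).+1 in
        let Bv' := addt (B v) (Some u) a' d' in
        if Bv' != B v then improve nbrs lam tau fuel' v (updB B v Bv', c1)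
        else Some (B, c1)
      end in
    foldl step (Some (B0, st.2.+1)) [seq (t, v) | t <- B0 u, v <- nbrs u]
  end.

Definition initB (V : finType) (s : V) : V -> seq (trip V) :=
  fun v => if v == s then [:: (None, MInf, PInf)] else [::].

Definition nedges (V : finType) (e : rel V) : nat :=
  #|[set [set x.1; x.2] | x in [set x : V * V | e x.1 x.2]]|.
Definition maxdeg (V : finType) (e : rel V) : nat :=
  \max_(v : V) #|[set w | e v w]|.

From HB Require Import structures.
From mathcomp Require Import all_boot all_order zify.
Set Implicit Arguments. Unset Strict Implicit. Unset Printing Implicit Defensive.

(* The cost is amortized against a potential.  For each arc (w, v) of the
   footprint, count the cells (a, d) of the grid {+oo, t0, .., t0+tau-1} x
   {-oo, t0, .., t0+tau-1} covered by some triplet (w, a'', d'') of B_v, i.e.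
   with a'' <= a and d <= d''.  Adding a triplet never uncovers a cell, and an
   addition that changes B_v covers its own cell (a', d'), which is in the grid
   since a' and d' are labels or infinite; hence every recursive call is paid
   for by a strict increase of the potential, which never exceeds
   2 m (tau+1)^2.  The pairs (first component, arrival) of a bag are pairwise
   distinct, so |B_u| <= Delta (tau+1) + 1, and one call costs
   O(Delta^2 tau^2) besides its recursive calls. *)

Lemma ext_le_refl x : ext_le x x.
Proof. by case: x => /=. Qed.

Lemma ext_le_trans y x z : ext_le x y -> ext_le y z -> ext_le x z.
Proof. by case: x => [|m|]; case: y => [|n|]; case: z => [|p|] //=; apply: leq_trans. Qed.

Lemma ext_le_total x y : ext_le x y || ext_le y x.
Proof. by case: x => [|m|]; case: y => [|n|] //=; apply: leq_total. Qed.

Lemma mem_firstge l a : firstge l a \in PInf :: [seq Fin t | t <- l].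
Proof.
elim: l => [|t l IH] /=; first exact: mem_head.
rewrite -/(firstge l a) /ext_min; move: IH; rewrite !inE.
by case: ifP => _; [case: ifP => _ |]; rewrite ?eqxx ?orbT //;
  case/orP=> ->; rewrite ?orbT.
Qed.

Lemma mem_lastle l d : lastle l d \in MInf :: [seq Fin t | t <- l].
Proof.
elim: l => [|t l IH] /=; first exact: mem_head.
rewrite -/(lastle l d) /ext_max; move: IH; rewrite !inE.
by case: ifP => _; [case: ifP => _ |]; rewrite ?eqxx ?orbT //;
  case/orP=> ->; rewrite ?orbT.
Qed.

Lemma ltn_sum_seq (I : eqType) (r : seq I) (F G : I -> nat) i0 :
  i0 \in r -> (forall i, F i <= G i) -> F i0 < G i0 ->
  \sum_(i <- r) F i < \sum_(i <- r) G i.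
Proof.
move=> r_i0 leFG ltFG; elim: r r_i0 => [|x r IH] //; rewrite inE !big_cons.
case/orP=> [/eqP <-|/IH ltr]; last by rewrite -addnS leq_add.
by rewrite -addSn leq_add // leq_sum.
Qed.

Lemma sum_seq_le_const (I : Type) (r : seq I) (F : I -> nat) k :
  (forall i, F i <= k) -> \sum_(i <- r) F i <= size r * k.
Proof.
move=> leFk; rewrite mulnC -count_predT -iter_addn_0 -big_const_seq.
exact: leq_sum.
Qed.

Section Bags.
Variable V : finType.
Implicit Types (B : seq (trip V)) (x : option V) (t : trip V).

Definition covers x (a d : ext) t := [&& t.1.1 == x, ext_le t.1.2 a & ext_le d t.2].

Definition key t := (t.1.1, t.1.2).

Lemma addt_changed B x a d : addt B x a d != B -> ~~ has (covers x a d) B.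
Proof. by rewrite /addt; case: ifP; rewrite ?eqxx. Qed.

Lemma covers_addt B x a d : has (covers x a d) (addt B x a d).
Proof.
rewrite /addt; case: ifP => // _.
by rewrite /= /covers /= eqxx !ext_le_refl.
Qed.

Lemma has_covers_addt B x a d y a0 d0 :
  has (covers y a0 d0) B -> has (covers y a0 d0) (addt B x a d).
Proof.
rewrite /addt; case: ifP => // _ /hasP[t Bt /and3P[/eqP ty ta td]].
case: (boolP [&& t.1.1 == x, ext_le a t.1.2 & ext_le t.2 d]).
  case/and3P=> /eqP tx at_ dt; apply/orP; left.
  by rewrite /covers /= -tx ty eqxx (ext_le_trans at_ ta) (ext_le_trans td dt).
move=> kept; apply/orP; right; apply/hasP; exists t.
  by rewrite mem_filter kept.
by rewrite /covers ty eqxx ta td.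
Qed.

Lemma mem_addt B x a d t : t \in addt B x a d -> t = (x, a, d) \/ t \in B.
Proof.
rewrite /addt; case: ifP => _; first by right.
by rewrite inE mem_filter => /orP[/eqP|/andP[_]]; [left | right].
Qed.

Lemma uniq_keys_addt B x a d : uniq (map key B) -> uniq (map key (addt B x a d)).
Proof.
rewrite /addt; case: ifP => // not_covered uB.
rewrite map_cons cons_uniq (subseq_uniq (map_subseq _ (filter_subseq _ _)) uB) andbT.
apply/mapP => -[t]; rewrite mem_filter => /andP[kept Bt] [tx ta].
move/negbT/hasPn: not_covered => /(_ t Bt); move: kept.
rewrite /covers tx ta eqxx ext_le_refl /= => /negbTE dt /negbTE td.
by have := ext_le_total d t.2; rewrite dt td.
Qed.

End Bags.

Arguments key {V} t.

Section Potential.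
Variables (V : finType) (e : rel V) (t0 tau : nat).
Implicit Types (B : V -> seq (trip V)) (L : seq (trip V)).

Definition arr_grid := PInf :: [seq Fin t | t <- iota t0 tau].
Definition dep_grid := MInf :: [seq Fin t | t <- iota t0 tau].

Lemma size_arr_grid : size arr_grid = tau.+1.
Proof. by rewrite /= size_map size_iota. Qed.

Lemma size_dep_grid : size dep_grid = tau.+1.
Proof. by rewrite /= size_map size_iota. Qed.

Definition score (w : V) L :=
  \sum_(a <- arr_grid) \sum_(d <- dep_grid) has (covers (Some w) a d) L.

Definition arcs := [set p : V * V | e p.1 p.2].

Definition potential B := \sum_(p in arcs) score p.1 (B p.2).

Definition potential_max := #|arcs| * tau.+1 ^ 2.

Lemma score_le w L : score w L <= tau.+1 ^ 2.
Proof.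
rewrite /score -size_arr_grid; apply: sum_seq_le_const => a.
rewrite size_arr_grid -size_dep_grid -[X in _ <= X]muln1.
by apply: sum_seq_le_const => d; apply: leq_b1.
Qed.

Lemma potential_le B : potential B <= potential_max.
Proof. by rewrite /potential_max -sum_nat_const leq_sum // => p _; apply: score_le. Qed.

Lemma score_addt_le w L x a d : score w L <= score w (addt L x a d).
Proof.
apply: leq_sum => a0 _; apply: leq_sum => d0 _.
by case: (boolP (has _ L)) => // /(has_covers_addt x a d) ->.
Qed.

Lemma score_addt_lt w L a d : a \in arr_grid -> d \in dep_grid ->
  addt L (Some w) a d != L -> score w L < score w (addt L (Some w) a d).
Proof.
move=> a_grid d_grid /addt_changed not_covered.
apply: (ltn_sum_seq a_grid) => [a0|].
  by apply: leq_sum => d0 _; case: (boolP (has _ L)) => // /(has_covers_addt _ a d) ->.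
apply: (ltn_sum_seq d_grid) => [d0|].
  by case: (boolP (has _ L)) => // /(has_covers_addt _ a d) ->.
by rewrite (negbTE not_covered) covers_addt.
Qed.

Lemma potential_updB_lt B u v a d : e u v -> a \in arr_grid -> d \in dep_grid ->
  addt (B v) (Some u) a d != B v ->
  potential B < potential (updB B v (addt (B v) (Some u) a d)).
Proof.
move=> euv a_grid d_grid changed; have uv_arc : (u, v) \in arcs by rewrite inE.
rewrite /potential !(bigD1 (u, v) uv_arc) /= [updB _ _ _ v]/updB eqxx -addSn.
rewrite leq_add ?score_addt_lt // leq_sum // => p _.
by rewrite /updB; case: eqP => [->|_]; rewrite ?score_addt_le.
Qed.

End Potential.

Lemma set2_inj (T : finType) (x y : T * T) :
  [set x.1; x.2] = [set y.1; y.2] -> x = y \/ x = (y.2, y.1).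
Proof.
case: x y => [a b] [c d] /= eq_ab_cd.
have a_cd : a \in [set c; d] by rewrite -eq_ab_cd set21.
have b_cd : b \in [set c; d] by rewrite -eq_ab_cd set22.
have c_ab : c \in [set a; b] by rewrite eq_ab_cd set21.
have d_ab : d \in [set a; b] by rewrite eq_ab_cd set22.
by case/set2P: a_cd => ?; case/set2P: b_cd => ?; case/set2P: c_ab => ?;
  case/set2P: d_ab => ?; subst; auto.
Qed.

Lemma card_arcs_le (V : finType) (e : rel V) : #|arcs e| <= 2 * nedges e.
Proof.
rewrite /nedges -/(arcs e); set f := fun x : V * V => [set x.1; x.2].
rewrite -sum1_card (partition_big f (mem (f @: arcs e))) /=; last first.
  by move=> x ax; apply: imset_f.
rewrite mulnC -sum_nat_const leq_sum // => _ /imsetP[x0 _ ->].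
rewrite sum1dep_card (leq_trans _ (_ : #|[set x0; (x0.2, x0.1)]| <= 2)) //; last first.
  by rewrite cards2; case: (_ != _).
apply/subset_leq_card/subsetP => x; rewrite !inE => /andP[_ /eqP /set2_inj[]->].
  by rewrite eqxx.
by rewrite eqxx orbT.
Qed.

Lemma potential_max_lt (V : finType) (e : rel V) tau :
  (potential_max e tau).+1 <= 2 * (nedges e).+1 * tau.+1 ^ 2.
Proof. by have := card_arcs_le e; rewrite /potential_max; nia. Qed.

Section WellFormed.
Variables (V : finType) (e : rel V) (t0 tau : nat).
Hypothesis e_sym : symmetric e.
Implicit Types (B : V -> seq (trip V)).

Definition wf_trip (v : V) (t : trip V) :=
  if t.1.1 is Some w then e v w && (t.1.2 \in arr_grid t0 tau) else t.1.2 == MInf.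

Definition wf_bags B := forall v, uniq (map key (B v)) /\ {in B v, forall t, wf_trip v t}.

Lemma wf_bags_init s : wf_bags (initB s).
Proof. by move=> v; rewrite /initB; case: eqP => // _; split=> // t /[!inE] /eqP ->. Qed.

Lemma wf_bags_updB B u v a d : wf_bags B -> e u v -> a \in arr_grid t0 tau ->
  wf_bags (updB B v (addt (B v) (Some u) a d)).
Proof.
move=> wfB euv a_grid w; rewrite /updB; case: eqP => [->|_]; last exact: wfB.
have [uB wfBv] := wfB v; split; first exact: uniq_keys_addt.
by move=> t /mem_addt[->|/wfBv //]; rewrite /wf_trip /= e_sym euv.
Qed.

Lemma count_from_le B u v : wf_bags B ->
  count (fun t : trip V => t.1.1 == Some u) (B v) <= tau.+1.
Proof.
move=> wfB; have [uB wfBv] := wfB v.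
rewrite -size_filter -(size_map key) -(size_arr_grid t0 tau).
rewrite -(size_map (pair (Some u)) (arr_grid t0 tau)).
apply: uniq_leq_size; first exact: subseq_uniq (map_subseq _ (filter_subseq _ _)) uB.
move=> k /mapP[t]; rewrite mem_filter => /andP[/eqP tu Bt] ->.
have := wfBv t Bt; rewrite /wf_trip /key tu => /andP[_ a_grid].
exact: map_f.
Qed.

Lemma card_nbrs_le u : #|[set w | e u w]| <= maxdeg e.
Proof. exact: (leq_bigmax (F := fun v => #|[set w | e v w]|) u). Qed.

Lemma size_bag_le B u : wf_bags B -> size (B u) <= (maxdeg e * tau.+1).+1.
Proof.
move=> wfB; have [uB wfBu] := wfB u.
pose keys := [seq (Some w, a) | w <- enum [set w | e u w], a <- arr_grid t0 tau].
apply: leq_trans (_ : size ((None, MInf) :: keys) <= _).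
  rewrite -(size_map key); apply: uniq_leq_size => // k /mapP[t Bt ->].
  have := wfBu t Bt; rewrite /wf_trip /key; case: t.1.1 => [w /andP[euw a_grid]|/eqP ->].
    by rewrite inE allpairs_f ?orbT // mem_enum inE.
  exact: mem_head.
rewrite -[size _]/(size keys).+1 ltnS size_allpairs -cardE size_arr_grid.
by rewrite leq_mul2r card_nbrs_le orbT.
Qed.

End WellFormed.

(* Verbatim copy of the loop body of [improve]. *)
Definition improve_step (V : finType) (nbrs : V -> seq V) (lam : V -> V -> seq nat)
    (tau fuel : nat) (u : V) (ost : option (state V)) (p : trip V * V) :
    option (state V) :=
  match ost with
  | None => None
  | Some stc =>
    let B := stc.1 in let c := stc.2 in
    let a := p.1.1.2 in let d := p.1.2 in let v := p.2 in
    let a' := firstge (lam u v) a in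
    let d' := lastle (lam u v) d in
    let c1 := c + 2 * tau.+1 + (count (fun t : trip V => t.1.1 == Some u) (B v)).+1 in
    let Bv' := addt (B v) (Some u) a' d' in
    if Bv' != B v then improve nbrs lam tau fuel v (updB B v Bv', c1)
    else Some (B, c1)
  end.

Lemma improveS (V : finType) (nbrs : V -> seq V) (lam : V -> V -> seq nat)
    (tau fuel : nat) (u : V) (st : state V) :
  improve nbrs lam tau fuel.+1 u st =
  foldl (improve_step nbrs lam tau fuel u) (Some (st.1, st.2.+1))
        [seq (t, v) | t <- st.1 u, v <- nbrs u].
Proof. by []. Qed.

Section Cost.
Variables (V : finType) (e : rel V) (lam : V -> V -> seq nat) (nbrs : V -> seq V).
Variables (t0 tau : nat).
Hypothesis e_sym : symmetric e.
Hypothesis lam_range : forall u v, e u v -> forall t, t \in lam u v -> t0 <= t < t0 + tau.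
Hypothesis nbrsP : forall u, perm_eq (nbrs u) (enum [pred v | e u v]).

Local Notation potential := (potential e t0 tau).
Local Notation potential_max := (potential_max e tau).
Local Notation wf_bags := (wf_bags e t0 tau).
Local Notation arr_grid := (arr_grid t0 tau).
Local Notation dep_grid := (dep_grid t0 tau).

Lemma firstge_grid u v a : e u v -> firstge (lam u v) a \in arr_grid.
Proof.
move=> euv; have := mem_firstge (lam u v) a; rewrite !inE => /orP[-> // | /mapP[t lt ->]].
by rewrite map_f ?orbT // mem_iota; apply: lam_range lt.
Qed.

Lemma lastle_grid u v d : e u v -> lastle (lam u v) d \in dep_grid.
Proof.
move=> euv; have := mem_lastle (lam u v) d; rewrite !inE => /orP[-> // | /mapP[t lt ->]].
by rewrite map_f ?orbT // mem_iota; apply: lam_range lt.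
Qed.

Lemma mem_nbrs u v : (v \in nbrs u) = e u v.
Proof. by rewrite (perm_mem (nbrsP u)) mem_enum. Qed.

Lemma size_nbrs_le u : size (nbrs u) <= maxdeg e.
Proof. by rewrite (perm_size (nbrsP u)) -cardE -cardsE card_nbrs_le. Qed.

Definition iter_cost := 2 * tau.+1 + tau.+2.

Definition call_cost := 1 + (maxdeg e * tau.+1).+1 * maxdeg e * iter_cost.

Definition run_bound (st : state V) (k : nat) (r : option (state V)) :=
  exists2 st', r = Some st' & [/\ wf_bags st'.1, potential st.1 <= potential st'.1 &
    st'.2 <= st.2 + k + call_cost * (potential st'.1 - potential st.1)].

Lemma run_bound_tick st k c :
  wf_bags st.1 -> c <= st.2 + k -> run_bound st k (Some (st.1, c)).
Proof. by move=> wf_st le_c; exists (st.1, c); rewrite // subnn muln0 addn0. Qed.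

Lemma run_bound_le st k k' r : k <= k' -> run_bound st k r -> run_bound st k' r.
Proof. by move=> le_k [st' -> [wf_st' le_pot le_c]]; exists st'; split => //; lia. Qed.

Lemma run_bound_bind st st' k k' r :
  run_bound st k (Some st') -> run_bound st' k' r -> run_bound st (k + k') r.
Proof.
move=> [_ [<-] [_ le_pot' le_c']] [st'' -> [wf_st'' le_pot'' le_c'']].
exists st''; split => //; first exact: leq_trans le_pot''.
have split_pot : potential st''.1 - potential st.1 =
  (potential st''.1 - potential st'.1) + (potential st'.1 - potential st.1) by lia.
by move: le_c''; rewrite split_pot mulnDr; lia.
Qed.

Lemma run_bound_charge st st' k r :
  potential st.1 < potential st'.1 -> st'.2 <= st.2 + k ->
  run_bound st' call_cost r -> run_bound st k r.
Proof.
move=> lt_pot le_c [st'' -> [wf_st'' le_pot le_c'']]; exists st''; split => //.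
  exact: leq_trans (ltnW lt_pot) le_pot.
have : call_cost * (potential st''.1 - potential st'.1).+1 <=
       call_cost * (potential st''.1 - potential st.1) by rewrite leq_mul2l; lia.
by move: le_c''; rewrite mulnS; lia.
Qed.

Definition improve_spec fuel := forall u st, wf_bags st.1 ->
  potential_max < potential st.1 + fuel ->
  run_bound st call_cost (improve nbrs lam tau fuel u st).

Lemma improve_step_bound fuel u st p : improve_spec fuel -> e u p.2 -> wf_bags st.1 ->
  potential_max < potential st.1 + fuel.+1 ->
  run_bound st iter_cost (improve_step nbrs lam tau fuel u (Some st) p).
Proof.
case: st p => B c [[[_ a] d] v] IH /= euv wfB fuel_big; rewrite /improve_step /=.
have le_cost : c + 2 * tau.+1 + (count (fun t : trip V => t.1.1 == Some u) (B v)).+1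
               <= c + iter_cost.
  by rewrite -addnA !leq_add2l ltnS (count_from_le u v wfB).
case: ifP => [changed|_]; last exact: run_bound_tick.
have lt_pot := potential_updB_lt euv (firstge_grid a euv) (lastle_grid d euv) changed.
apply: (@run_bound_charge (B, c) (_, _) _ _ lt_pot le_cost); apply: IH => /=; last by lia.
exact: wf_bags_updB (firstge_grid a euv).
Qed.

Lemma foldl_improve_step_bound fuel u l st : improve_spec fuel ->
  (forall p, p \in l -> e u p.2) -> wf_bags st.1 ->
  potential_max < potential st.1 + fuel.+1 ->
  run_bound st (size l * iter_cost)
    (foldl (improve_step nbrs lam tau fuel u) (Some st) l).
Proof.
move=> IH; elim: l st => [|p l IHl] st l_arcs wf_st fuel_big.
  by case: st wf_st {fuel_big} => B c wf_st; apply: run_bound_tick; rewrite ?addn0.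
have step_bound := improve_step_bound IH (l_arcs p (mem_head p l)) wf_st fuel_big.
have [st' step_st' [wf_st' le_pot _]] := step_bound.
rewrite -[foldl _ _ _]/(foldl _ (improve_step _ _ _ _ _ (Some st) p) l).
rewrite step_st' mulSn.
apply: (run_bound_bind (st' := st')); first by rewrite -step_st'.
apply: IHl => // [q lq|]; last by lia.
by apply: l_arcs; rewrite inE lq orbT.
Qed.

Lemma improve_specS fuel : improve_spec fuel -> improve_spec fuel.+1.
Proof.
move=> IH u [B c] wfB fuel_big; rewrite improveS /=.
set l := [seq (t, v) | t <- B u, v <- nbrs u].
have l_arcs p : p \in l -> e u p.2.
  by case/allpairsP=> [[t v] [_ nbr_v ->]]; rewrite -mem_nbrs.
have size_l : size l <= (maxdeg e * tau.+1).+1 * maxdeg e.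
  by rewrite size_allpairs leq_mul ?size_nbrs_le ?(size_bag_le u wfB).
apply: (run_bound_le (k := 1 + size l * iter_cost)).
  by rewrite leq_add2l leq_mul2r size_l orbT.
apply: (run_bound_bind (st' := (B, c.+1))).
  by apply: run_bound_tick; rewrite ?addn1.
exact: foldl_improve_step_bound.
Qed.

Lemma improve_spec_all fuel : improve_spec fuel.
Proof.
elim: fuel => [|fuel IH]; last exact: improve_specS.
by move=> u st _; rewrite addn0 ltnNge potential_le.
Qed.

Lemma improve_cost s : exists fuel B c,
  improve nbrs lam tau fuel s (initB s, 0) = Some (B, c) /\
  c <= call_cost * potential_max.+1.
Proof.
have fuel_big : potential_max < potential (initB s) + potential_max.+1 by lia.
have [[B c] run [_ _ le_c]] :=
  improve_spec_all (st := (initB s, 0)) s (wf_bags_init e t0 tau s) fuel_big.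
exists potential_max.+1, B, c; split => //; apply: leq_trans le_c _.
rewrite /= add0n mulnS leq_add2l leq_mul2l.
by rewrite (leq_trans (leq_subr _ _) (potential_le _ _ _ _)) orbT.
Qed.

Lemma call_cost_le : call_cost <= 5 * (maxdeg e).+1 ^ 2 * tau.+1 ^ 2.
Proof. by rewrite /call_cost /iter_cost; nia. Qed.

End Cost.

Theorem theorem3 :
  exists C : nat,
  forall (V : finType) (e : rel V) (lam : V -> V -> seq nat)
         (nbrs : V -> seq V) (t0 tau : nat) (s : V),
    symmetric e -> irreflexive e ->
    (forall u v, lam u v = lam v u) ->
    (forall u v, e u v -> forall t, t \in lam u v -> t0 <= t < t0 + tau) ->
    (forall u, perm_eq (nbrs u) (enum [pred v | e u v])) ->
    exists (fuel : nat) (B : V -> seq (trip V)) (c : nat),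
      improve nbrs lam tau fuel s (initB s, 0) = Some (B, c) /\
      c <= C * (nedges e).+1 * (maxdeg e).+1 ^ 2 * tau.+1 ^ 4.
Proof.
exists 10 => V e lam nbrs t0 tau s e_sym _ _ lam_range nbrsP.
have [fuel [B [c [run le_c]]]] := improve_cost e_sym lam_range nbrsP s.
exists fuel, B, c; split => //; apply: (leq_trans le_c).
apply: leq_trans (leq_mul (call_cost_le e tau) (potential_max_lt e tau)) _.
by apply/eq_leq; nia.
Qed.
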